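(* Let $X$ be a nonzero real Banach space, $m\ge1$, $f_0\colon X\to\,]{-}\infty,\infty]$ proper, convex and lower semicontinuous, and $f_1,\dots,f_m$ real-valued convex continuous functions on $X$. Suppose there exists $x^{**}\in X^{**}$ such that $f_i^{**}(x^{**})\le0$ for all $i=0,\dots,m$. Then for every $\varepsilon>0$ there exists $x\in X$ such that $f_i(x)\le\varepsilon$ for all $i=0,\dots,m$.
   Context: $f^*(x^* )=\sup_{x\in X}[\langle x,x^*\rangle-f(x)]$ on $X^*$ and $f^{**}(x^{**})=\sup_{x^*\in X^*}[\langle x^*,x^{**}\rangle-f^*(x^* )]$ on the bidual $X^{**}$. *)

From HB Require Import structures.
From mathcomp Require Import all_boot all_order all_algebra.
From mathcomp Require Import all_classical all_reals all_analysis.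
Set Implicit Arguments. Unset Strict Implicit. Unset Printing Implicit Defensive.
Import Order.TTheory GRing.Theory Num.Theory.
Import numFieldNormedType.Exports.
Local Open Scope classical_set_scope.
Local Open Scope ring_scope.

Section Banach_duality.
Context {R : realType} {X : normedModType R}.

Definition is_linear_fun (phi : X -> R) :=
  forall (a : R) (x y : X), phi (a *: x + y) = a * phi x + phi y.

Definition in_dual (phi : X -> R) := is_linear_fun phi /\ continuous phi.

Definition dual_norm (phi : X -> R) : R :=
  sup [set `|phi x| | x in [set x : X | `|x| <= 1]].

Definition in_bidual (xi : (X -> R) -> R) :=
  (forall (a : R) (phi psi : X -> R), in_dual phi -> in_dual psi ->
      xi (fun x => a * phi x + psi x) = a * xi phi + xi psi) /\
  (exists C : R, forall phi, in_dual phi -> `|xi phi| <= C * dual_norm phi).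

Definition conj (f : X -> \bar R) (phi : X -> R) : \bar R :=
  ereal_sup [set ((phi x)%:E - f x)%E | x in [set: X]].

Definition biconj (f : X -> \bar R) (xi : (X -> R) -> R) : \bar R :=
  ereal_sup [set ((xi phi)%:E - conj f phi)%E | phi in in_dual].

Definition proper_fun (f : X -> \bar R) :=
  (forall x, f x != -oo%E) /\ (exists x, f x != +oo%E).

Definition convex_efun (f : X -> \bar R) :=
  forall (x y : X) (t : R), 0 < t -> t < 1 ->
    (f (t *: x + (1 - t) *: y)%R <= t%:E * f x + (1 - t)%:E * f y)%E.

Definition convex_rfun (f : X -> R) :=
  forall (x y : X) (t : R), 0 <= t <= 1 ->
    f (t *: x + (1 - t) *: y) <= t * f x + (1 - t) * f y.

End Banach_duality.

From HB Require Import structures.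
From mathcomp Require Import all_boot all_order all_algebra.
From mathcomp Require Import all_classical all_reals all_analysis.
From mathcomp Require Import ring lra.
Import Order.TTheory GRing.Theory Num.Theory.
Import numFieldNormedType.Exports.
Local Open Scope classical_set_scope.
Local Open Scope ring_scope.

Set Implicit Arguments.
Unset Strict Implicit.
Unset Printing Implicit Defensive.

(* Suppose that no x satisfies f_i(x) <= eps for every i = 0, ..., m.  The set of
   families (x_i - x, y_i - eps)_i with f_i(x_i) < y_i is then convex and avoids 0, and it
   has a core point because f_1, ..., f_m are bounded above near a point of dom f_0.  An
   algebraic Hahn-Banach argument (Zorn's lemma on graphs of partial linear forms)
   separates it from 0; this yields Lagrange multipliers: continuous functionals phi_i
   summing to 0 and weights nu_i >= 0 summing to 1 with
   sum_i phi_i(x_i) <= sum_i nu_i y_i - eps whenever f_i(x_i) < y_i.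
   On the other hand, writing xi for x^**, f_i^** (xi) <= 0 gives
   xi(phi) <= sup_x [phi(x) - nu f_i(x)] for nu > 0, and also for nu = 0 after perturbing
   phi by an affine minorant of f_i, itself obtained from the multiplier lemma.  Summing
   over i, xi(sum_i phi_i) = 0 contradicts the multiplier inequality. *)

Section real_facts.
Context {R : realType}.

Lemma le0_of_ubounded_mul (a b : R) : (forall t, 0 <= t -> t * a <= b) -> a <= 0.
Proof.
move=> ub; rewrite leNgt; apply/negP => a0.
have := ub ((`|b| + 1) / a) (divr_ge0 (addr_ge0 (normr_ge0 b) ler01) (ltW a0)).
by rewrite divfK ?gt_eqF //; have := ler_norm b; lra.
Qed.

Lemma sup_between (L H : set R) : L !=set0 -> H !=set0 ->
  (forall l h, L l -> H h -> l <= h) ->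
  exists c, (forall l, L l -> l <= c) /\ (forall h, H h -> c <= h).
Proof.
move=> L0 [h0 Hh0] LH; exists (sup L); split => [l Ll|h Hh].
  by apply: sup_upper_bound => //; split => //; exists h0 => l' Ll'; exact: LH.
by apply: ge_sup => // l Ll; exact: LH.
Qed.

End real_facts.

Section linear_form.
Context {R : realType} {V : lmodType R}.

Definition linear_form (F : V -> R) := linear_for *%R F.

Definition linear_of_form (F : V -> R) (FL : linear_form F) : {linear V -> R^o} :=
  HB.pack F (GRing.isLinear.Build R V R^o *:%R F FL).

Variables (F : V -> R) (FL : linear_form F).

Lemma linear_form0 : F 0 = 0.
Proof. exact: (raddf0 (linear_of_form FL)). Qed.

Lemma linear_formD u v : F (u + v) = F u + F v.
Proof. exact: (raddfD (linear_of_form FL)). Qed.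

Lemma linear_formN u : F (- u) = - F u.
Proof. exact: (raddfN (linear_of_form FL)). Qed.

Lemma linear_formZ a u : F (a *: u) = a * F u.
Proof. exact: (linearZZ (linear_of_form FL)). Qed.

Lemma linear_form_sum (I : Type) (r : seq I) (w : I -> V) :
  F (\sum_(i <- r) w i) = \sum_(i <- r) F (w i).
Proof. exact: (raddf_sum (linear_of_form FL)). Qed.

End linear_form.

Lemma linear_form_continuous {R : realType} {X : normedModType R} (phi : X -> R)
    (r C : R) :
  linear_form phi -> 0 < r -> (forall h, `|h| < r -> phi h <= C) -> continuous phi.
Proof.
move=> L r0 ub; apply: (@bounded_linear_continuous _ X R^o (linear_of_form L)).
rewrite /bounded_near; near=> K; apply/nbhs_ballP; exists r => // h.
rewrite -ball_normE /= sub0r normrN => hr.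
have : phi (- h) <= C by apply: ub; rewrite normrN.
rewrite (linear_formN L) => Nh; apply: (@le_trans _ _ C).
  by rewrite ler_norml; have := ub _ hr; lra.
by near: K; apply: nbhs_pinfty_ge; rewrite num_real.
Unshelve. all: by end_near. Qed.

Section algebraic_separation.
Context {R : realType} {V : lmodType R}.
Variables (U : set V) (x0 : V).
Hypothesis U_convex :
  forall u v (t : R), U u -> U v -> 0 < t -> t < 1 -> U (t *: u + (1 - t) *: v).
Hypothesis U_absorbing : forall v, exists2 d : R, 0 < d & U (d *: v).
Hypothesis U_x0 : ~ U x0.

Let U0 : U 0.
Proof. by have [d _] := U_absorbing 0; rewrite scaler0. Qed.

(* Graphs of linear forms on subspaces of V, equal to 1 at x0 and bounded by 1 on U. *)
Definition separating_graph (A : set (V * R)) :=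
  [/\ forall p q (a : R), A p -> A q -> A (a *: p + q),
      forall v a b, A (v, a) -> A (v, b) -> a = b,
      A (x0, 1) &
      forall v a, A (v, a) -> U v -> a <= 1].

Let separating_graph0 A : separating_graph A -> A 0.
Proof. by case=> Acl _ Ax0 _; rewrite -(addNr (x0, 1)) -scaleN1r; apply: Acl. Qed.

Let separating_graph_comb A p q (a b : R) :
  separating_graph A -> A p -> A q -> A (a *: p + b *: q).
Proof.
move=> sepA Ap Aq; have [Acl _ _ _] := sepA.
by apply: (Acl) => //; rewrite -[b *: q]addr0; apply: Acl => //; exact: separating_graph0.
Qed.

Let line_graph : separating_graph [set p | exists t : R, p = (t *: x0, t)].
Proof.
have x0_neq0 : x0 != 0 by apply: contraPneq U_x0 => ->.
split.
- move=> _ _ a [t ->] [s ->]; exists (a * t + s).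
  by congr pair => /=; rewrite scalerDl scalerA.
- move=> _ a b [t [-> ->]] [s [ts ->]]; apply/eqP; rewrite -subr_eq0.
  have : (t - s) *: x0 == 0 by rewrite scalerBl ts subrr.
  by rewrite scaler_eq0 (negbTE x0_neq0) orbF.
- by exists 1; rewrite scale1r.
- move=> _ a [t [-> ->]] Ut; rewrite leNgt; apply/negP => t1; apply: U_x0.
  have t0 : 0 < t by apply: lt_trans t1.
  have tV0 : 0 < t^-1 by rewrite invr_gt0.
  have tV1 : t^-1 < 1 by rewrite invf_lt1.
  have := U_convex Ut U0 tV0 tV1.
  by rewrite scaler0 addr0 scalerA mulVf ?gt_eqF // scale1r.
Qed.

Let graph_chain (F : set (set (V * R))) :
  F `<=` [set A | A = set0 \/ separating_graph A] -> total_on F subset ->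
  \bigcup_(A in F) A = set0 \/ separating_graph (\bigcup_(A in F) A).
Proof.
move=> FP Ftot; set B := \bigcup_(A in F) A.
have [[p0 [A0 FA0 A0p0]]|B0] := pselect (exists p, B p); last first.
  by left; apply/seteqP; split => // p Bp; apply: B0; exists p.
have sepF A p : F A -> A p -> separating_graph A.
  by move=> FA Ap; case: (FP A FA) => // A_eq0; rewrite A_eq0 in Ap.
have both p q : B p -> B q -> exists2 A, F A & A p /\ A q.
  move=> [A1 FA1 A1p] [A2 FA2 A2q].
  by have [A12|A21] := Ftot _ _ FA1 FA2; [exists A2 => //; split => //; exact: A12
                                     | exists A1 => //; split => //; exact: A21].
have [_ _ A0x0 _] := sepF _ _ FA0 A0p0.
right; split.
- move=> p q a Bp Bq; have [A FA [Ap Aq]] := both _ _ Bp Bq.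
  by exists A => //; have [Acl _ _ _] := sepF _ _ FA Ap; exact: Acl.
- move=> v a b Ba Bb; have [A FA [Aa Ab]] := both _ _ Ba Bb.
  by have [_ Afn _ _] := sepF _ _ FA Aa; exact: Afn Aa Ab.
- by exists A0.
- by move=> v a [A FA Aa]; have [_ _ _] := sepF _ _ FA Aa; apply.
Qed.

Let extension_bound A v d1 a1 t d2 a2 s : separating_graph A ->
  A (d1, a1) -> A (d2, a2) -> 0 < t -> 0 < s ->
  U (d1 + t *: v) -> U (d2 - s *: v) -> (a2 - 1) / s <= (1 - a1) / t.
Proof.
move=> sepA A1 A2 t0 s0 U1 U2; have [_ _ _ Ab] := sepA.
have st0 : 0 < s + t by rewrite addr_gt0.
pose l := s / (s + t).
have l0 : 0 < l by rewrite divr_gt0.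
have l1 : l < 1 by rewrite ltr_pdivrMr // mul1r ltrDl.
have lt : l * t = (1 - l) * s by rewrite /l; field; rewrite gt_eqF.
have := U_convex U1 U2 l0 l1.
rewrite scalerDr scalerBr !scalerA lt addrACA subrr addr0 => Ucomb.
have := Ab _ _ (separating_graph_comb l (1 - l) sepA A1 A2) Ucomb.
have -> : l * a1 + (1 - l) * a2 = (s * a1 + t * a2) / (s + t) by rewrite /l; field; rewrite gt_eqF.
rewrite ler_pdivrMr // mul1r => le.
by rewrite ler_pdivrMr // mulrAC ler_pdivlMr //; nra.
Qed.

Let extension_value A v : separating_graph A ->
  exists c, forall d a t, A (d, a) -> U (d + t *: v) -> a + t * c <= 1.
Proof.
move=> sepA; have [_ _ _ Ab] := sepA; have A00 : A (0, 0) := separating_graph0 sepA.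
pose L := [set r | exists d a s, [/\ A (d, a), 0 < s, U (d - s *: v) & r = (a - 1) / s]].
pose H := [set r | exists d a t, [/\ A (d, a), 0 < t, U (d + t *: v) & r = (1 - a) / t]].
have L0 : L !=set0.
  have [s s0 Us] := U_absorbing (- v).
  by exists ((0 - 1) / s), 0, 0, s; split; rewrite // sub0r -scalerN.
have H0 : H !=set0.
  have [t t0 Ut] := U_absorbing v.
  by exists ((1 - 0) / t), 0, 0, t; split; rewrite // add0r.
have LH l h : L l -> H h -> l <= h.
  move=> [d2 [a2 [s [A2 s0 U2 ->]]]] [d1 [a1 [t [A1 t0 U1 ->]]]].
  exact: extension_bound sepA A1 A2 t0 s0 U1 U2.
have [c [Lc cH]] := sup_between L0 H0 LH.
exists c => d a t Ada Udt; have [t0|t0|t0] := ltgtP t 0.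
- have : L ((a - 1) / - t) by exists d, a, (- t); rewrite oppr_gt0 scaleNr opprK.
  by move/Lc; rewrite ler_pdivrMr ?oppr_gt0 // mulrN; lra.
- have : H ((1 - a) / t) by exists d, a, t.
  by move/cH; rewrite ler_pdivlMr //; lra.
- by rewrite t0 scale0r addr0 in Udt; rewrite t0 mul0r addr0; exact: Ab Ada Udt.
Qed.

Let extension A v : separating_graph A -> ~ (exists a, A (v, a)) ->
  exists2 B, separating_graph B & A `<` B.
Proof.
move=> sepA vA; have [c cU] := extension_value v sepA.
have [Acl Afn Ax0 _] := sepA.
pose B := [set p | exists d a t, A (d, a) /\ p = (d + t *: v, a + t * c)].
have AB : A `<=` B.
  by move=> [d a] Ada; exists d, a, 0; rewrite scale0r mul0r !addr0.
exists B; last first.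
  split => // BA; apply: vA; exists c; apply: BA.
  exists 0, 0, 1; split; first exact: separating_graph0.
  by rewrite scale1r mul1r !add0r.
split.
- move=> _ _ b [d [a [t [Ada ->]]]] [d' [a' [t' [Ada' ->]]]].
  exists (b *: d + d'), (b * a + a'), (b * t + t'); split; first exact: (Acl (d, a) (d', a')).
  congr pair => /=; last by rewrite -[b *: _]/(b * _); ring.
  by rewrite scalerDr scalerDl scalerA addrACA.
- move=> _ a1 a2 [d [a [t [Ada [-> ->]]]]] [d' [a' [t' [Ada' [dd' ->]]]]].
  have [tt'|tt'] := eqVneq t t'.
    rewrite -tt' in dd' *; rewrite -(addIr _ dd') in Ada'.
    by rewrite (Afn _ _ _ Ada Ada').
  pose p := (t - t')^-1 *: (-1 *: (d, a) + (d', a')) + 0.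
  have Ap : A p by apply: (Acl); [exact: Acl | exact: separating_graph0].
  have pv : p.1 = v.
    rewrite /p /= addr0 scaleN1r [- d + _]addrC.
    have -> : d' - d = (t - t') *: v.
      by rewrite scalerBl -[d'](addrK (t' *: v)) -dd' addrAC [d + _]addrC addrK.
    by rewrite scalerA mulVf ?scale1r // subr_eq0.
  by exfalso; apply: vA; exists p.2; rewrite -pv -surjective_pairing.
- exact: AB.
- by move=> _ _ [d [a [t [Ada [-> ->]]]]]; exact: cU.
Qed.

Lemma separation_absorbing :
  exists F : V -> R, [/\ linear_form F, F x0 = 1 & forall u, U u -> F u <= 1].
Proof.
have [A [PA Amax]] := Zorn_bigcup graph_chain.
have sepA : separating_graph A.
  case: PA => // A0; exfalso; apply: (Amax _ _ (or_intror line_graph)).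
  by rewrite A0; split => // /(_ (x0, 1)); apply; exists 1; rewrite scale1r.
have [Acl Afn Ax0 Ab] := sepA.
have Adom v : exists a, A (v, a).
  apply: contrapT => vA; have [B sepB AB] := extension sepA vA.
  exact: Amax AB (or_intror sepB).
pose F v := xget 0 [set a | A (v, a)].
have AF v : A (v, F v) by exact: (@xgetPex _ 0 [set a | A (v, a)] (Adom v)).
exists F; split.
- by move=> a u v; apply: Afn (AF _) (Acl (u, F u) (v, F v) a (AF u) (AF v)).
- exact: Afn (AF _) Ax0.
- by move=> u; apply: Ab (AF u).
Qed.

End algebraic_separation.

Lemma separation_core_point {R : realType} {V : lmodType R} (W : set V) (w0 : V) :
  (forall u v (t : R), W u -> W v -> 0 < t -> t < 1 -> W (t *: u + (1 - t) *: v)) ->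
  (forall v, exists2 d : R, 0 < d & W (w0 + d *: v)) -> ~ W 0 ->
  exists F : V -> R, [/\ linear_form F, F w0 = -1 & forall w, W w -> F w <= 0].
Proof.
move=> W_convex W_core W0.
have [|//||F [FL Fw0 FU]] := @separation_absorbing R V [set u | W (w0 + u)] (- w0).
- move=> u v t Wu Wv t0 t1; have := W_convex _ _ _ Wu Wv t0 t1; rewrite /=.
  by rewrite !scalerDr addrACA -scalerDl subrKC scale1r.
- by rewrite /= subrr.
exists F; split => //; first by rewrite -[w0]opprK linear_formN // Fw0.
move=> w Ww; have := FU (w - w0); rewrite /= addrC subrK => /(_ Ww).
by rewrite linear_formD // Fw0; lra.
Qed.

Section extended_functions.
Context {R : realType} {X : normedModType R}.

Lemma convex_efun_lt (f : X -> \bar R) x x' (a a' t : R) : convex_efun f ->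
  (f x < a%:E)%E -> (f x' < a'%:E)%E -> 0 < t -> t < 1 ->
  (f (t *: x + (1 - t) *: x')%R < (t * a + (1 - t) * a')%:E)%E.
Proof.
move=> f_convex fx fx' t0 t1; apply: le_lt_trans (f_convex x x' t t0 t1) _.
by rewrite [X in (_ < X)%E]EFinD !EFinM; apply: lteD; rewrite lte_pmul2l ?lte_fin ?subr_gt0.
Qed.

Lemma convex_efun_EFin (h : X -> R) : convex_rfun h -> convex_efun (fun x => (h x)%:E).
Proof.
move=> h_convex x y t t0 t1; rewrite -!EFinM -EFinD lee_fin.
by apply: h_convex; rewrite !ltW.
Qed.

Lemma convex_rfun_dist (a : X) (b k : R) : 0 <= k ->
  convex_rfun (fun y => b + k * `|y - a|).
Proof.
move=> k0 x y t /andP[t0 t1].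
have -> : t *: x + (1 - t) *: y - a = t *: (x - a) + (1 - t) *: (y - a).
  by rewrite !scalerBr addrACA -opprD -scalerDl subrKC scale1r.
have := ler_normD (t *: (x - a)) ((1 - t) *: (y - a)).
rewrite !normrZ ger0_norm // ger0_norm ?subr_ge0 // => le.
have := ler_wpM2l k0 le; nra.
Qed.

Lemma proper_fun_fin (f : X -> \bar R) : proper_fun f -> exists x (r : R), f x = r%:E.
Proof. by move=> [fN [x]]; move: (fN x); case fx: (f x) => [r| |] // _ _; exists x, r. Qed.

Lemma lower_semicontinuous_ball (f : X -> \bar R) x (a : R) : lower_semicontinuous f ->
  (a%:E < f x)%E -> exists2 rho : R, 0 < rho & forall y, `|x - y| < rho -> (a%:E < f y)%E.
Proof.
move=> f_lsc /f_lsc[V /nbhs_ballP[rho rho0 Vball] fV].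
by exists rho => // y xy; apply/fV/Vball; rewrite -ball_normE.
Qed.

Lemma lower_semicontinuous_EFin (h : X -> R) : continuous h ->
  lower_semicontinuous (fun x => (h x)%:E).
Proof.
move=> h_cont x a; rewrite lte_fin => ax.
by exists [set y | a < h y]; [exact: cvgr_gt (h_cont x) _ ax | move=> y; rewrite lte_fin].
Qed.

End extended_functions.

Section dual.
Context {R : realType} {X : normedModType R}.
Implicit Types phi psi : X -> R.

Lemma in_dual0 : in_dual (fun _ : X => 0 : R).
Proof. by split=> [a x y|x]; [rewrite mulr0 addr0 | exact: cvg_cst]. Qed.

Lemma in_dualZ (a : R) phi : in_dual phi -> in_dual (fun x => a * phi x).
Proof.
case=> L C; split=> [b x y|x]; first by rewrite L; ring.
by apply: cvgM; [exact: cvg_cst | exact: C].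
Qed.

Lemma in_dualD phi psi : in_dual phi -> in_dual psi -> in_dual (fun x => phi x + psi x).
Proof.
case=> L C [L' C']; split=> [b x y|x]; first by rewrite L L'; ring.
by apply: cvgD; [exact: C | exact: C'].
Qed.

Lemma in_dual_sum (I : Type) (r : seq I) (phi : I -> X -> R) :
  (forall i, in_dual (phi i)) -> in_dual (fun x => \sum_(i <- r) phi i x).
Proof.
move=> D; elim: r => [|i r IH]; first by under eq_fun do rewrite big_nil; exact: in_dual0.
by under eq_fun do rewrite big_cons; exact: in_dualD.
Qed.

End dual.

Definition lagrange_multipliers {R : realType} {X : normedModType R} {I : finType}
    (g : I -> X -> \bar R) (c : R) (phi : I -> X -> R) (nu : I -> R) :=
  [/\ forall i, in_dual (phi i), forall x, \sum_i phi i x = 0,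
      forall i, 0 <= nu i, \sum_i nu i = 1 &
      forall xs ys, (forall i, (g i (xs i) < (ys i)%:E)%E) ->
        \sum_i phi i (xs i) <= \sum_i nu i * ys i - c].

Section lagrange_multipliers.
Context {R : realType} {X : normedModType R} {I : finType}.
Variables (g : I -> X -> \bar R) (i0 : I) (xb : X) (M : I -> R) (c : R).
Hypothesis g_convex : forall i, convex_efun (g i).
Hypothesis g_i0 : (g i0 xb <= (M i0)%:E)%E.
Hypothesis g_ub : \forall y \near xb, forall i, i != i0 -> (g i y <= (M i)%:E)%E.
Hypothesis no_common_point : ~ exists x, forall i, (g i x < c%:E)%E.

(* [W] contains 0 exactly when the [g i] have a common point below [c]. *)
Let W : set (I -> X * R) :=
  [set w | exists x, forall i, (g i ((w i).1 + x)%R < ((w i).2 + c)%:E)%E].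
Let w0 : I -> X * R := fun i => (0, M i + 1 - c).

Let g_le_M i : (g i xb <= (M i)%:E)%E.
Proof. by have [->//|i_neq] := eqVneq i i0; exact: (nbhs_singleton g_ub) i i_neq. Qed.

Let xb_ball : exists2 rb : R, 0 < rb &
  forall y, `|xb - y| < rb -> forall i, i != i0 -> (g i y <= (M i)%:E)%E.
Proof.
have /nbhs_ballP[rb rb0 ball_ub] := g_ub.
by exists rb => // y xy; apply: ball_ub; rewrite -ball_normE.
Qed.

Let W_convex u v (t : R) : W u -> W v -> 0 < t -> t < 1 -> W (t *: u + (1 - t) *: v).
Proof.
move=> [x Wu] [y Wv] t0 t1; exists (t *: x + (1 - t) *: y) => i.
have := convex_efun_lt (g_convex i) (Wu i) (Wv i) t0 t1.
rewrite /= addrACA -!scalerDr.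
suff -> : t *: (u i).2 + (1 - t) *: (v i).2 + c =
  t * ((u i).2 + c) + (1 - t) * ((v i).2 + c) by [].
by rewrite -[t *: _]/(t * _) -[(1 - t) *: _]/((1 - t) * _); ring.
Qed.

Let W_core v : exists2 d : R, 0 < d & W (w0 + d *: v).
Proof.
have [rb rb0 ball_ub] := xb_ball.
pose u i := (v i).1 - (v i0).1.
have small i : \forall d \near (0 : R)^'+, d * (1 + `|u i| + `|(v i).2|) < Num.min rb 1.
  have K0 : 0 < 1 + `|u i| + `|(v i).2| by rewrite -addrA ltr_pwDl ?addr_ge0.
  near=> d; rewrite -ltr_pdivlMr //; near: d; apply: nbhs_right_lt.
  by rewrite divr_gt0 // lt_min rb0 ltr01.
near (0 : R)^'+ => d.
have d0 : 0 < d by near: d; exact: nbhs_right_gt.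
have dsmall : forall i, d * (1 + `|u i| + `|(v i).2|) < Num.min rb 1.
  by near: d; exact: filter_forall small.
exists d => //; exists (xb - d *: (v i0).1) => i /=.
have -> : 0 + d *: (v i).1 + (xb - d *: (v i0).1) = xb + d *: u i.
  by rewrite add0r addrCA scalerBr.
have [du db] : d * `|u i| < rb /\ d * `|(v i).2| < 1.
  have := dsmall i; rewrite lt_min => /andP[dr d1].
  by have := normr_ge0 (u i); have := normr_ge0 (v i).2; split; nra.
have g_ub_i : (g i (xb + d *: u i)%R <= (M i)%:E)%E.
  have [->|i_neq] := eqVneq i i0; first by rewrite /u subrr scaler0 addr0.
  by apply: ball_ub i_neq; rewrite opprD addNKr normrN normrZ gtr0_norm.
apply: le_lt_trans g_ub_i _; rewrite lte_fin -[d *: _]/(d * _).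
have : - (v i).2 <= `|(v i).2| by rewrite -normrN ler_norm.
nra.
Unshelve. all: by end_near. Qed.

Let W_not0 : ~ W 0.
Proof.
move=> [x Wx]; apply: no_common_point; exists x => i.
by have := Wx i; rewrite /= !add0r.
Qed.

Section separating_form.
Variable F : (I -> X * R) -> R.
Hypotheses (F_linear : linear_form F) (F_w0 : F w0 = -1) (F_W : forall w, W w -> F w <= 0).

Let phi i x := F (fun j => if j == i then (x, 0) else 0).
Let mu i := F (fun j => if j == i then (0, 1) else 0).

Let F_sum w : F w = \sum_i (phi i (w i).1 + (w i).2 * mu i).
Proof.
have w_sum : w = \sum_i (fun j => if j == i then w i else 0).
  apply/funext => j; rewrite fct_sumE (bigD1 j) //= eqxx big1 ?addr0 // => i.
  by rewrite eq_sym => /negbTE ->.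
rewrite {1}w_sum linear_form_sum //; apply: eq_bigr => i _.
rewrite /phi /mu -linear_formZ // -linear_formD //; congr F; apply/funext => j; rewrite !fctE.
case: (j == i); last by rewrite scaler0 addr0.
by case: (w i) => x r; congr pair => /=; rewrite ?scaler0 ?addr0 // -[r *: _]/(r * _) mulr1 add0r.
Qed.

Let phi_linear i : linear_form (phi i).
Proof.
move=> a x y; rewrite /phi -linear_formZ // -linear_formD //; congr F.
apply/funext => j; rewrite !fctE; case: (j == i); last by rewrite scaler0 addr0.
by congr pair => /=; rewrite -[a *: _]/(a * _) mulr0 addr0.
Qed.

Let phi_le xs x ys : (forall i, (g i (xs i) < (ys i)%:E)%E) ->
  \sum_i phi i (xs i - x) + \sum_i (ys i - c) * mu i <= 0.
Proof.
move=> lt; rewrite -big_split.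
have := @F_W (fun i => (xs i - x, ys i - c)); rewrite F_sum; apply.
by exists x => i; rewrite /= !subrK.
Qed.

Let mu_w0 : \sum_i (M i + 1 - c) * mu i = -1.
Proof.
rewrite -F_w0 (F_sum w0); apply: eq_bigr => i _.
by rewrite /= (linear_form0 (phi_linear i)) add0r.
Qed.

Let phi_le1 xs x : (forall i, (g i (xs i) <= (M i)%:E)%E) -> \sum_i phi i (xs i - x) <= 1.
Proof.
move=> xsM; have lt i : (g i (xs i) < (M i + 1)%:E)%E.
  by apply: le_lt_trans (xsM i) _; rewrite lte_fin ltrDl.
by have := @phi_le xs x _ lt; rewrite mu_w0; lra.
Qed.

Let sum_phi_eq0 z : \sum_i phi i z = 0.
Proof.
have le1 t : t * \sum_i phi i z <= 1.
  have := @phi_le1 (fun=> xb) (xb - t *: z) g_le_M.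
  under eq_bigr => i _ do rewrite opprB addrC subrK (linear_formZ (phi_linear i)).
  by rewrite -mulr_sumr.
apply/eqP; rewrite eq_le; apply/andP; split.
  by apply: (@le0_of_ubounded_mul _ _ 1) => t _; exact: le1.
rewrite -oppr_le0; apply: (@le0_of_ubounded_mul _ _ 1) => t _.
by rewrite mulrN -mulNr; exact: le1.
Qed.

Let mu_le0 i : mu i <= 0.
Proof.
apply: (@le0_of_ubounded_mul _ _ 1) => T T0.
pose ys j := M j + 1 + (if j == i then T else 0).
have lt j : (g j xb < (ys j)%:E)%E.
  apply: le_lt_trans (g_le_M j) _; rewrite lte_fin /ys -addrA ltrDl.
  by case: (j == i); rewrite ?addr0 // ltr_pwDl.
have := @phi_le (fun=> xb) xb ys lt.
under eq_bigr => j _ do rewrite subrr (linear_form0 (phi_linear j)).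
under [X in _ + X]eq_bigr => j _ do rewrite /ys addrAC mulrDl.
rewrite big1_eq add0r big_split /= mu_w0 (bigD1 i) //= eqxx big1 ?addr0.
  by lra.
by move=> j /negbTE ->; rewrite mul0r.
Qed.

Let sum_mu_lt0 : \sum_i mu i < 0.
Proof.
rewrite lt_neqAle sumr_le0 ?andbT; last by move=> i _; exact: mu_le0.
apply/eqP => mu0.
have mu_eq0 i : mu i = 0.
  apply/eqP; rewrite -oppr_eq0; apply/eqP.
  apply: (@psumr_eq0P _ _ predT (fun i => - mu i)) => // [j _|].
    by rewrite oppr_ge0 mu_le0.
  by rewrite sumrN mu0 oppr0.
by move: mu_w0; rewrite big1 => [|i _]; [lra | rewrite mu_eq0 mulr0].
Qed.

Let phi_continuous i : continuous (phi i).
Proof.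
have [rb rb0 ball_ub] := xb_ball.
apply: (linear_form_continuous (phi_linear i) rb0 (C := 1)) => h hr.
pose x := if i == i0 then xb - h else xb.
have := @phi_le1 (fun j => x + (if j == i then h else 0)) x.
under eq_bigr => j _ do rewrite addrAC subrr add0r.
rewrite (bigD1 i) //= eqxx big1 ?addr0; last first.
  by move=> j /negbTE ->; exact: (linear_form0 (phi_linear j)).
apply=> j; have [->|j_neq] := eqVneq j i0.
  by rewrite /x eq_sym; case: eqP => _; rewrite ?subrK ?addr0.
apply: ball_ub (j_neq); rewrite /x; have [i_i0|_] := eqVneq i i0.
  by rewrite -i_i0 in j_neq; rewrite (negbTE j_neq) addr0 opprB addrC subrK.
by rewrite opprD addNKr normrN; case: (j == i); rewrite ?normr0.
Qed.

Lemma separating_form_multipliers :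
  exists phi nu, lagrange_multipliers g c phi nu.
Proof.
pose S := - \sum_i mu i; have S0 : 0 < S by rewrite oppr_gt0.
exists (fun i x => S^-1 * phi i x), (fun i => S^-1 * - mu i); split.
- by move=> i; apply: in_dualZ; split; [exact: phi_linear | exact: phi_continuous].
- by move=> x; rewrite -mulr_sumr sum_phi_eq0 mulr0.
- by move=> i; apply: mulr_ge0; [rewrite invr_ge0 ltW | rewrite oppr_ge0 mu_le0].
- by rewrite -mulr_sumr sumrN mulVf ?gt_eqF.
move=> xs ys lt; have := @phi_le xs 0 ys lt.
under eq_bigr do rewrite subr0.
under [X in _ + X]eq_bigr do rewrite mulrBl mulrC.
rewrite sumrB -mulr_sumr -mulr_sumr => le.
under [X in _ <= X - _]eq_bigr do rewrite -mulrA mulNr.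
rewrite -mulr_sumr sumrN -[c in _ - c](mulKf (lt0r_neq0 S0)) -mulrBr.
by rewrite ler_pM2l ?invr_gt0 // /S; lra.
Qed.

End separating_form.

Lemma lagrange_multipliers_exist : exists phi nu, lagrange_multipliers g c phi nu.
Proof.
have [F [F_linear F_w0 F_W]] := separation_core_point W_convex W_core W_not0.
exact: separating_form_multipliers F_linear F_w0 F_W.
Qed.

End lagrange_multipliers.

Lemma affine_minorant {R : realType} {X : normedModType R} (f : X -> \bar R) :
  proper_fun f -> convex_efun f -> lower_semicontinuous f ->
  exists2 psi, in_dual psi & exists beta : R, forall x r, f x = r%:E -> psi x - r <= beta.
Proof.
move=> f_proper f_convex f_lsc; have [xb [r0 fr0]] := proper_fun_fin f_proper.
have [rho rho0 f_gt] : exists2 rho : R, 0 < rho &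
    forall y, `|xb - y| < rho -> ((r0 - 1)%:E < f y)%E.
  by apply: lower_semicontinuous_ball; rewrite // fr0 lte_fin gtrBl.
(* [h < r0 - 1] exactly on the ball where [f > r0 - 1], so [f] and [h] have no common point
   below [r0 - 1]; as [h xb < r0 - 1], the multiplier of [f] cannot vanish. *)
pose h y := r0 - 2 + rho^-1 * `|y - xb|.
pose g (b : bool) := if b then f else fun y => (h y)%:E.
have g_convex b : convex_efun (g b).
  by case: b => //; apply: convex_efun_EFin; apply: convex_rfun_dist; rewrite invr_ge0 ltW.
have [|||phi [nu [phi_dual phi_sum nu_ge0 nu_sum mult]]] :=
  @lagrange_multipliers_exist R X bool g true xb (fun b => if b then r0 else r0 - 1)
    (r0 - 1) g_convex.
- by rewrite /= fr0.
- apply/nbhs_ballP; exists rho => // y; rewrite -ball_normE /= => xy [] // _.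
  have : rho^-1 * `|xb - y| <= 1 by rewrite ler_pdivrMl // mulr1 ltW.
  by rewrite lee_fin /h distrC; lra.
- move=> [y gy]; have := gy false; rewrite lte_fin /h => hy.
  have : `|xb - y| < rho.
    have : rho^-1 * `|y - xb| < 1 by lra.
    by rewrite ltr_pdivrMl // mulr1 distrC.
  by move/f_gt/(lt_trans (gy true)); rewrite ltxx.
have phi_f x : phi false x = - phi true x by have := phi_sum x; rewrite big_bool /=; lra.
have h_xb : h xb = r0 - 2 by rewrite /h subrr normr0 mulr0 addr0.
have nu_f : nu false = 1 - nu true by move: nu_sum; rewrite big_bool /=; lra.
have nu_t : 0 < nu true.
  rewrite lt_def nu_ge0 andbT; apply/eqP => nu_t0.
  have lt b : (g b xb < (if b then r0 + 1 else r0 - 2^-1 - 1)%:E)%E.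
    by case: b; rewrite /= ?fr0 ?h_xb lte_fin; lra.
  by have := mult (fun=> xb) _ lt; rewrite !big_bool /= phi_f nu_f nu_t0; lra.
exists (fun x => (nu true)^-1 * phi true x); first exact: in_dualZ.
exists ((nu true)^-1 * phi true xb + 2 - r0) => x r fx.
have lt b : (g b (if b then x else xb) < (if b then r + 1 else r0 - 1)%:E)%E.
  by case: b; rewrite /= ?fx ?h_xb lte_fin; lra.
have := mult _ _ lt; rewrite !big_bool /= phi_f nu_f => le; rewrite -subr_ge0.
have -> : (nu true)^-1 * phi true xb + 2 - r0 - ((nu true)^-1 * phi true x - r) =
    (nu true)^-1 * (phi true xb - phi true x + nu true * (r + 2 - r0)).
  by field; exact: lt0r_neq0.
by apply: mulr_ge0; [rewrite invr_ge0 ltW | nra].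
Qed.

Section bidual.
Context {R : realType} {X : normedModType R}.
Implicit Types phi psi : X -> R.
Variable xi : (X -> R) -> R.
Hypothesis xi_bidual : in_bidual xi.

Lemma bidual0 : xi (fun _ => 0) = 0.
Proof.
have := xi_bidual.1 1 _ _ in_dual0 in_dual0.
under eq_fun do rewrite mul1r addr0.
by rewrite mul1r; lra.
Qed.

Lemma bidualZ (a : R) phi : in_dual phi -> xi (fun x => a * phi x) = a * xi phi.
Proof.
move=> D; have := xi_bidual.1 a _ _ D in_dual0.
by under eq_fun do rewrite addr0; rewrite bidual0 addr0.
Qed.

Lemma bidualD phi psi : in_dual phi -> in_dual psi ->
  xi (fun x => phi x + psi x) = xi phi + xi psi.
Proof.
move=> D D'; have := xi_bidual.1 1 _ _ D D'.
by under eq_fun do rewrite mul1r; rewrite mul1r.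
Qed.

Lemma bidual_sum (I : Type) (r : seq I) (phi : I -> X -> R) :
  (forall i, in_dual (phi i)) ->
  xi (fun x => \sum_(i <- r) phi i x) = \sum_(i <- r) xi (phi i).
Proof.
move=> D; elim: r => [|i r IH].
  by under eq_fun do rewrite big_nil; rewrite bidual0 big_nil.
under eq_fun do rewrite big_cons.
by rewrite bidualD ?IH ?big_cons //; exact: in_dual_sum.
Qed.

Lemma biconj_le0_approx_gt0 (g : X -> \bar R) phi (l eta : R) :
  (forall x, g x != -oo%E) -> (biconj g xi <= 0)%E -> in_dual phi -> 0 < l -> 0 < eta ->
  exists x r, g x = r%:E /\ xi phi - eta < phi x - l * r.
Proof.
move=> gN g_biconj Dphi l0 eta0.
pose psi x := l^-1 * phi x.
have xi_psi : xi psi = l^-1 * xi phi by exact: bidualZ.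
have conj_gt : ((xi psi - eta / l)%:E < conj g psi)%E.
  have : ((xi psi)%:E - conj g psi <= 0)%E.
    by apply: le_trans g_biconj; apply: ereal_sup_ubound; exists psi => //; exact: in_dualZ.
  case: (conj g psi) => [s| |] //=; last by rewrite ltry.
  rewrite -EFinD !lee_fin lte_fin => le.
  have : 0 < eta / l by rewrite divr_gt0.
  lra.
have [_ [x _ <-]] := ereal_sup_gt conj_gt.
have := gN x; case gx: (g x) => [r| |] //= _; rewrite -EFinD lte_fin => lt.
exists x, r; split => //.
have -> : xi phi - eta = l * (xi psi - eta / l) by rewrite xi_psi; field; rewrite gt_eqF.
have -> : phi x - l * r = l * (psi x - r) by rewrite /psi; field; rewrite gt_eqF.
by rewrite ltr_pM2l.
Qed.

Lemma biconj_le0_approx (g : X -> \bar R) phi (nu eta : R) :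
  proper_fun g -> convex_efun g -> lower_semicontinuous g -> (biconj g xi <= 0)%E ->
  in_dual phi -> 0 <= nu -> 0 < eta ->
  exists x r, g x = r%:E /\ xi phi - eta < phi x - nu * r.
Proof.
move=> g_proper g_convex g_lsc g_biconj Dphi nu0 eta0.
have [psi Dpsi [beta psi_le]] := affine_minorant g_proper g_convex g_lsc.
(* Perturbing [phi] by [tau * psi] makes the weight [nu + tau] positive, at a cost of
   [tau * (beta - xi psi) <= eta / 2]. *)
pose tau := eta / 2 / (1 + `|beta - xi psi|).
have tau0 : 0 < tau by rewrite !divr_gt0 // ltr_pwDl.
have tau_le : tau * (beta - xi psi) <= eta / 2.
  apply: le_trans (_ : tau * (1 + `|beta - xi psi|) <= _).
    by rewrite ler_pM2l // ler_wpDl // ler_norm.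
  by rewrite /tau divfK // gt_eqF // ltr_pwDl.
have nu_tau : 0 < nu + tau by rewrite ltr_wpDl.
have eta2 : 0 < eta / 2 by rewrite divr_gt0.
have [x [r [gx lt]]] :=
  biconj_le0_approx_gt0 g_proper.1 g_biconj (in_dualD (in_dualZ tau Dpsi) Dphi) nu_tau eta2.
exists x, r; split => //; move: lt; rewrite bidualD ?bidualZ //; last exact: in_dualZ.
by have := ler_wpM2l (ltW tau0) (psi_le x r gx); lra.
Qed.

Lemma biconj_le0_epi_approx (I : finType) (g : I -> X -> \bar R) (phi : I -> X -> R)
    (nu : I -> R) (delta : R) :
  (forall i, proper_fun (g i)) -> (forall i, convex_efun (g i)) ->
  (forall i, lower_semicontinuous (g i)) -> (forall i, (biconj (g i) xi <= 0)%E) ->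
  (forall i, in_dual (phi i)) -> (forall x, \sum_i phi i x = 0) ->
  (forall i, 0 <= nu i) -> \sum_i nu i = 1 -> 0 < delta ->
  exists xs ys, (forall i, (g i (xs i) < (ys i)%:E)%E) /\
    \sum_i nu i * ys i - delta < \sum_i phi i (xs i).
Proof.
move=> g_proper g_convex g_lsc g_biconj phi_dual phi_sum nu_ge0 nu_sum delta0.
pose eta := delta / (#|I|%:R + 2).
have eta0 : 0 < eta by rewrite divr_gt0 // ltr_wpDl.
have N_eta : (#|I|%:R + 1) * eta < delta.
  rewrite /eta mulrCA gtr_pMr // ltr_pdivrMr ?ltr_wpDl // mul1r ltrD2l.
  by rewrite ltr1n.
have /choice[p p_approx] i : exists p : X * R,
    g i p.1 = p.2%:E /\ xi (phi i) - eta < phi i p.1 - nu i * p.2.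
  have [x [r ?]] := biconj_le0_approx (g_proper i) (g_convex i) (g_lsc i) (g_biconj i)
    (phi_dual i) (nu_ge0 i) eta0.
  by exists (x, r).
exists (fun i => (p i).1), (fun i => (p i).2 + eta); split.
  by move=> i; rewrite (p_approx i).1 lte_fin ltrDl.
have xi_sum : \sum_i xi (phi i) = 0.
  by rewrite -bidual_sum //; under eq_fun do rewrite phi_sum; exact: bidual0.
have : \sum_i (xi (phi i) - eta) <= \sum_i (phi i (p i).1 - nu i * (p i).2).
  by apply: ler_sum => i _; exact: ltW (p_approx i).2.
rewrite sumrB xi_sum sumr_const -mulr_natl sumrB.
under [X in X - delta < _]eq_bigr do rewrite mulrDr.
rewrite big_split /= -mulr_suml nu_sum mul1r -[#|xpredT|]/(#|I|).
by move: N_eta; lra.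
Qed.

End bidual.

Theorem lemma7p1 (R : realType) (X : completeNormedModType R) (m : nat)
  (f0 : X -> \bar R) (f : 'I_m -> X -> R) :
  (exists x : X, x != 0) ->
  (0 < m)%N ->
  proper_fun f0 -> convex_efun f0 -> lower_semicontinuous f0 ->
  (forall i, convex_rfun (f i)) -> (forall i, continuous (f i)) ->
  (exists xi : (X -> R) -> R, in_bidual xi /\
     (biconj f0 xi <= 0)%E /\
     (forall i, (biconj (fun x => (f i x)%:E) xi <= 0)%E)) ->
  forall eps : R, 0 < eps ->
    exists x : X, (f0 x <= eps%:E)%E /\ (forall i, f i x <= eps).
Proof.
move=> _ _ f0_proper f0_convex f0_lsc f_convex f_cont [xi [xi_bidual [f0_biconj f_biconj]]].
move=> eps eps0; apply: contrapT => no_sol.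
pose g (i : option 'I_m) := if i is Some j then fun x => (f j x)%:E else f0.
have g_proper i : proper_fun (g i) by case: i => [j|] //; split => //; exists 0.
have g_convex i : convex_efun (g i) by case: i => [j|] //; exact: convex_efun_EFin.
have g_lsc i : lower_semicontinuous (g i).
  by case: i => [j|] //; exact: lower_semicontinuous_EFin.
have g_biconj i : (biconj (g i) xi <= 0)%E by case: i.
have [xb [r0 f0r0]] := proper_fun_fin f0_proper.
have [|||phi [nu [phi_dual phi_sum nu_ge0 nu_sum multipliers]]] :=
  @lagrange_multipliers_exist R X _ g None xb
    (fun i => if i is Some j then f j xb + 1 else r0) eps g_convex.
- by rewrite /= f0r0.
- apply: filter_forall => -[j|]; last exact: nearW.
  near=> y => _; rewrite lee_fin ltW //; near: y.
  by apply: (cvgr_lt _ (f_cont j xb)); rewrite ltrDl.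
- move=> [x x_lt]; apply: no_sol; exists x; split => [|j]; first exact: ltW (x_lt None).
  by rewrite -lee_fin; exact: ltW (x_lt (Some j)).
have [xs [ys [xs_lt gap]]] := biconj_le0_epi_approx xi_bidual g_proper g_convex g_lsc
  g_biconj phi_dual phi_sum nu_ge0 nu_sum eps0.
by have := multipliers xs ys xs_lt; lra.
Unshelve. all: by end_near. Qed.
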